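(* Let $G$ be a finite graph with $\chi_c(G)=\frac{n}{d}$ where $\gcd(n,d)=1$. If $d\ge 2$ (equivalently, $\chi_c(G)\neq\chi(G)$), then $\phi(G)\le \left\lceil \chi_c(G)\left(1+\frac{1}{d-1}\right)\right\rceil\le 2\chi(G)-1$.
   Context: For integers $n\ge 2d\ge 2$, the circular complete graph $K_{n/d}$ has vertex set $\{0,1,\dots,n-1\}$, with $i$ adjacent to $j$ iff $d\le |i-j|\le n-d$. The circular chromatic number $\chi_c(G)$ is the minimum of $n/d$ (with $\gcd(n,d)=1$) such that $G$ admits a homomorphism to $K_{n/d}$; $\chi(G)$ is the chromatic number. An independent set of $G$ is a free independent set if it is contained in at least two distinct maximal independent sets of $G$. The free chromatic number $\phi(G)$ is the minimum positive integer $t$ such that $V(G)$ can be partitioned into $t$ free independent sets of $G$ ($\phi(G)=\infty$ if no such partition exists). *)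

(* Finite simple graphs as a symmetric irreflexive relation on a finType. *)
From HB Require Import structures.
From mathcomp Require Import all_boot all_order all_algebra.
Set Implicit Arguments. Unset Strict Implicit. Unset Printing Implicit Defensive.
Import Order.TTheory GRing.Theory Num.Theory.

Section Graphs.
Variable T : finType.
Variable e : rel T.

Definition absdiff (i j : nat) : nat := (i - j) + (j - i).

(* adjacency in the circular complete graph K_{n/d}: d <= |i-j| <= n-d *)
Definition circ_adj (n d : nat) (i j : 'I_n) : bool :=
  (d <= absdiff i j) && (absdiff i j <= n - d).

Definition circ_hom (n d : nat) : Prop :=
  exists f : T -> 'I_n, forall u v, e u v -> circ_adj d (f u) (f v).

(* chi_c(G) = n/d with gcd(n,d)=1: minimum of n'/d' over coprime n' >= 2d' >= 2
   with G -> K_{n'/d'} *)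
Definition is_circ_chrom (n d : nat) : Prop :=
  [/\ 0 < d, 2 * d <= n, coprime n d, circ_hom n d &
      forall n' d', 0 < d' -> 2 * d' <= n' -> coprime n' d' -> circ_hom n' d' ->
        n * d' <= n' * d].

Definition colorable (k : nat) : Prop :=
  exists f : T -> 'I_k, forall u v, e u v -> f u != f v.

Definition is_chrom (k : nat) : Prop :=
  colorable k /\ forall k', colorable k' -> k <= k'.

Definition independent (S : {set T}) : bool :=
  [forall u in S, forall v in S, ~~ e u v].

Definition maximal_independent (S : {set T}) : bool :=
  independent S && [forall S' : {set T}, (S \proper S') ==> ~~ independent S'].

Definition free_independent (S : {set T}) : bool :=
  independent S &&
  [exists M1 : {set T}, exists M2 : {set T},
     [&& M1 != M2, maximal_independent M1, maximal_independent M2,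
         S \subset M1 & S \subset M2]].

Definition free_partition (t : nat) : Prop :=
  exists f : T -> 'I_t, forall c : 'I_t, free_independent [set x | f x == c].

(* phi(G) = t (finite); phi(G) = infinity iff no such t exists *)
Definition is_free_chrom (t : nat) : Prop :=
  [/\ 0 < t, free_partition t & forall t', 0 < t' -> free_partition t' -> t <= t'].

End Graphs.

(* Let c be a colouring of G by K_{n/d}.  Because n/d is the least ratio and
   d >= 2, c is tight at 0: some edge is coloured 0 and d.  Otherwise recolour
   0 by 1 and compose with i |-> floor((i d' - 1)/d), where n d' = n' d + 1;
   this maps G into K_{n'/d'} with n'/d' < n/d.  Consequently the vertices
   coloured by d - 1 consecutive colours, rotated to [1, d-1], form a free
   independent set: they lie in the independent sets c^-1[0, d-1] and
   c^-1[1, d], whose maximal extensions differ because of the tight edge.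
   Cutting Z_n into ceil(n/(d-1)) such arcs bounds phi(G), and n < chi(G) d
   gives ceil(n/(d-1)) <= 2 chi(G) - 1. *)

From HB Require Import structures.
From mathcomp Require Import all_boot all_order all_algebra zify ring.
Set Implicit Arguments. Unset Strict Implicit. Unset Printing Implicit Defensive.
Import Order.TTheory GRing.Theory Num.Theory.

Definition circ_adjn (n d i j : nat) : bool :=
  (d <= absdiff i j) && (absdiff i j <= n - d).

Lemma circ_adjnC n d i j : circ_adjn n d i j = circ_adjn n d j i.
Proof. by rewrite /circ_adjn /absdiff addnC. Qed.

Definition rotn (n r i : nat) : nat := if i + r < n then i + r else i + r - n.

Lemma rotn_lt n r i : r <= n -> i < n -> rotn n r i < n.
Proof. by rewrite /rotn; case: ifP; lia. Qed.

Lemma circ_adjn_rotn n d r i j : r <= n -> i < n -> j < n ->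
  circ_adjn n d i j -> circ_adjn n d (rotn n r i) (rotn n r j).
Proof. by rewrite /circ_adjn /rotn /absdiff; do 2 case: ifP; lia. Qed.

Lemma divnDM_ge a b q m : 0 < m -> a + q * m <= b -> a %/ m + q <= b %/ m.
Proof. by move=> m_gt0 le_ab; rewrite addnC -divnMDl // addnC leq_div2r. Qed.

Lemma divnDM_le a b q m : 0 < m -> b <= a + q * m -> b %/ m <= a %/ m + q.
Proof. by move=> m_gt0 le_ba; rewrite addnC -divnMDl // addnC leq_div2r. Qed.

Definition circ_down (d d' i : nat) : nat := (i * d' - 1) %/ d.

Lemma circ_down_gap n d n' d' i j : n * d' = n' * d + 1 -> 0 < d ->
  0 < i -> i < j < n -> d <= j - i <= n - d ->
  circ_down d d' i + d' <= circ_down d d' j <= circ_down d d' i + (n' - d').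
Proof.
move=> nE d_gt0 i_gt0 /andP[lt_ij lt_jn] /andP[le_dji le_jind]; rewrite /circ_down.
have d'_gt0 : 0 < d' by case: d' nE => //; rewrite muln0 addn1.
have dd'_le : d * d' <= (j - i) * d' by rewrite leq_mul2r le_dji orbT.
have ji_le : (j - i) * d' <= (n - d) * d' by rewrite leq_mul2r le_jind orbT.
apply/andP; split; first by apply: divnDM_ge => //; nia.
move: le_jind; rewrite leq_eqVlt => /orP[eq_jind | lt_jind]; last first.
  by apply: divnDM_le => //; nia.
(* [j - i = n - d] forces [i < d], so [d] does not divide [i * d'] and the
   floor cannot jump at [i * d']. *)
have i_lt_d : i < d by lia.
have cop_dd' : coprime d d'.
  by have := coprimenS (n' * d); rewrite -addn1 -nE coprimeMl !coprimeMr => /andP[_ /andP[]].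
have ndvd : ~~ (d %| i * d').
  by rewrite Gauss_dvdl //; apply/negP => /(dvdn_leq i_gt0); lia.
have le_j : j * d' - 1 <= i * d' + (n' - d') * d.
  have gap : (j - i) * d' = (n' - d') * d + 1.
    by rewrite (eqP eq_jind) !mulnBl nE (mulnC d'); lia.
  by move: gap; rewrite mulnBl; lia.
apply: leq_trans (divnDM_le d_gt0 le_j) _.
have idE : i * d' = (i * d' - 1).+1 by rewrite subn1 prednK // muln_gt0 i_gt0.
by rewrite leq_add2r {1}idE divnS // -idE (negbTE ndvd).
Qed.

Lemma circ_down_lt n d n' d' i : n * d' = n' * d + 1 -> 0 < d -> 0 < i < n ->
  circ_down d d' i < n'.
Proof.
move=> nE d_gt0 /andP[i_gt0 i_lt]; rewrite /circ_down ltn_divLR //.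
have d'_gt0 : 0 < d' by case: d' nE => //; rewrite muln0 addn1.
have : i * d' <= n.-1 * d' by rewrite leq_mul2r -ltnS prednK ?i_lt ?orbT //; lia.
by rewrite -subn1 mulnBl nE; lia.
Qed.

Lemma circ_adjn_down n d n' d' i j : n * d' = n' * d + 1 -> 0 < d ->
  0 < i < n -> 0 < j < n -> circ_adjn n d i j ->
  circ_adjn n' d' (circ_down d d' i) (circ_down d d' j).
Proof.
move=> nE d_gt0; wlog le_ij : i j / i <= j => [wlog_le|].
  move=> ri rj; case: (leqP i j) => [|/ltnW] le; first exact: wlog_le.
  by rewrite circ_adjnC => /(wlog_le j i le rj ri); rewrite circ_adjnC.
move=> /andP[i_gt0 _] /andP[_ j_lt]; rewrite /circ_adjn /absdiff.
move: le_ij; rewrite leq_eqVlt => /orP[/eqP <-|lt_ij]; first by rewrite subnn; lia.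
by move: (@circ_down_gap n d n' d' i j nE d_gt0 i_gt0); rewrite lt_ij j_lt; lia.
Qed.

Lemma lower_approx n d : 1 < d -> 2 * d <= n -> coprime n d ->
  exists n' d', [/\ n * d' = n' * d + 1, 0 < d', 2 * d' <= n' & coprime n' d'].
Proof.
move=> d_gt1 le_2dn cop_nd.
have [a a_lt] := Bezoutl n (ltnW d_gt1); rewrite gcdnC (eqP cop_nd) => /dvdnP[k kE].
have a_gt0 : 0 < a.
  by case: a kE {a_lt} => // /esym/eqP; rewrite mul0n addn0 muln_eq1; lia.
have lt_2dn : 2 * d < n.
  rewrite ltn_neqAle le_2dn andbT; apply: contraTneq cop_nd => <-.
  by rewrite /coprime gcdnC gcdnMl; lia.
have le_kn : k * d <= n * d by rewrite -kE; nia.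
have nE : n * (d - a) = (n - k) * d + 1 by rewrite mulnBr mulnBl (mulnC n a); lia.
exists (n - k), (d - a); split=> //; first by lia.
  have : 2 * (d - a) * d < (n - k) * d + 1.
    by rewrite -nE mulnAC ltn_mul2r lt_2dn subn_gt0 a_lt.
  by rewrite addn1 ltnS leq_pmul2r // ltnW.
have := coprimenS ((n - k) * d); rewrite -addn1 -nE coprimeMl !coprimeMr.
by case/andP=> /andP[].
Qed.

Lemma ceil_divn (R : archiRealFieldType) (a m : nat) : 0 < a -> 0 < m ->
  (Num.ceil (a%:R / m%:R : R) = (a.-1 %/ m).+1%:Z)%R.
Proof.
move=> a_gt0 m_gt0; apply: ceil_def.
rewrite -addn1 PoszD addrK !pmulrn.
rewrite ltr_pdivlMr ?ler_pdivrMr ?ltr0n // -!natrM ltr_nat ler_nat.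
by have := leq_divM a.-1 m; have := ltn_ceil a.-1 m_gt0; lia.
Qed.

Lemma div_mul_1DinvB1 (R : numFieldType) (n d : nat) : 1 < d ->
  (n%:R / d%:R * (1 + 1 / (d%:R - 1)) = n%:R / d.-1%:R :> R)%R.
Proof.
move=> d_gt1; have d_gt0 : 0 < d by lia.
rewrite -(prednK d_gt0) mulrSr addrK.
have dpos : (d.-1%:R != 0 :> R)%R by rewrite pnatr_eq0; lia.
have dpos' : ((d.-1%:R + 1) != 0 :> R)%R by rewrite -mulrSr pnatr_eq0.
by field; rewrite dpos dpos'.
Qed.

Section FreeColouring.
Variables (T : finType) (e : rel T).

Definition circ_colouring (n d : nat) (c : T -> nat) : Prop :=
  (forall x, c x < n) /\ forall u v, e u v -> circ_adjn n d (c u) (c v).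

Lemma circ_homP n d : circ_hom e n d <-> exists c, circ_colouring n d c.
Proof.
split=> [[f f_hom] | [c [c_lt c_hom]]].
  by exists (fun x => val (f x)); split=> [x|]; [exact: ltn_ord | exact: f_hom].
by exists (fun x => Ordinal (c_lt x)); exact: c_hom.
Qed.

Lemma circ_colouring_rotn n d r c : r <= n ->
  circ_colouring n d c -> circ_colouring n d (rotn n r \o c).
Proof.
move=> r_le [c_lt c_hom]; split=> [x | u v /c_hom]; first exact: rotn_lt.
exact: circ_adjn_rotn.
Qed.

Lemma independentS (A B : {set T}) :
  A \subset B -> independent e B -> independent e A.
Proof.
move=> /subsetP sAB /forall_inP iB; apply/forall_inP => u /sAB /iB /forall_inP iBu.
by apply/forall_inP => v /sAB /iBu.
Qed.

Lemma independent_arc n d c lo (W : {set T}) : circ_colouring n d c ->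
  (forall x, x \in W -> lo <= c x < lo + d) -> independent e W.
Proof.
move=> [_ c_hom] cW; apply/forall_inP => u uW; apply/forall_inP => v vW.
apply/negP => /c_hom; have := cW u uW; have := cW v vW.
by rewrite /circ_adjn /absdiff; lia.
Qed.

Lemma exists_maximal_independent (W : {set T}) :
  independent e W -> exists2 M, maximal_independent e M & W \subset M.
Proof.
move=> iW; pose P M := independent e M && (W \subset M).
have PW : P W by rewrite /P iW subxx.
case: (arg_maxnP (fun M : {set T} => #|M|) PW) => M /andP[iM sWM] M_max.
exists M => //; rewrite /maximal_independent iM.
apply/forall_inP => M' /[dup] ltMM' /proper_sub sMM'; apply/negP => iM'.
have := M_max M'; rewrite /P iM' (subset_trans sWM sMM') => /(_ isT).
by rewrite /= leqNgt (proper_card ltMM').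
Qed.

Lemma free_independent_of_edge (S W1 W2 : {set T}) u v :
  S \subset W1 -> S \subset W2 -> independent e W1 -> independent e W2 ->
  u \in W1 -> v \in W2 -> e u v -> free_independent e S.
Proof.
move=> sSW1 sSW2 iW1 iW2 uW1 vW2 euv.
have [M1 maxM1 sWM1] := exists_maximal_independent iW1.
have [M2 maxM2 sWM2] := exists_maximal_independent iW2.
rewrite /free_independent (independentS sSW1 iW1).
apply/existsP; exists M1; apply/existsP; exists M2.
rewrite maxM1 maxM2 (subset_trans sSW1 sWM1) (subset_trans sSW2 sWM2) !andbT.
apply/eqP => eqM12; move: maxM1 => /andP[/forall_inP/(_ u (subsetP sWM1 u uW1))].
by move=> /forall_inP/(_ v); rewrite eqM12 (subsetP sWM2 v vW2) euv => /(_ isT).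
Qed.

Lemma circ_colouring_shift0 n d c : symmetric e -> 0 < d -> 2 * d <= n ->
  circ_colouring n d c -> (forall u v, e u v -> c u = 0 -> c v != d) ->
  circ_colouring n d (fun x => if c x == 0 then 1 else c x).
Proof.
move=> e_sym d_gt0 le_2dn [c_lt c_hom] no_tight; split=> [x | u v euv].
  by case: eqP => _; [lia | exact: c_lt].
have := no_tight v u; rewrite e_sym euv => /(_ isT) tight_vu.
move: (c_hom u v euv) (no_tight u v euv) tight_vu (c_lt u) (c_lt v).
rewrite /circ_adjn /absdiff; case: (c u =P 0) => [->|_]; case: (c v =P 0) => [->|_].
- by lia.
- by move=> + /(_ erefl); lia.
- by move=> + _ /(_ erefl); lia.
- by lia.
Qed.

Lemma circ_hom_down n d n' d' c : n * d' = n' * d + 1 -> 0 < d ->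
  circ_colouring n d c -> (forall x, 0 < c x) -> circ_hom e n' d'.
Proof.
move=> nE d_gt0 [c_lt c_hom] c_gt0; apply/circ_homP.
exists (circ_down d d' \o c); split=> [x | u v /c_hom].
  by apply: (circ_down_lt nE); rewrite ?c_gt0 ?c_lt.
by apply: circ_adjn_down; rewrite ?c_gt0 ?c_lt.
Qed.

Lemma circ_colouring_tight n d c : symmetric e -> is_circ_chrom e n d -> 1 < d ->
  circ_colouring n d c -> exists u v, [/\ e u v, c u = 0 & c v = d].
Proof.
move=> e_sym [_ le_2dn cop_nd _ chi_min] d_gt1 col_c.
case: (boolP [exists u, exists v, [&& e u v, c u == 0 & c v == d]]).
  by case/existsP=> u /existsP[v /and3P[euv /eqP cu /eqP cv]]; exists u, v.
move=> no_tight; have [n' [d' [nE d'_gt0 le_2d'n' cop']]] := lower_approx d_gt1 le_2dn cop_nd.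
have hom' : circ_hom e n' d'.
  apply: (circ_hom_down nE (ltnW d_gt1) (circ_colouring_shift0 e_sym _ le_2dn col_c _)).
  - exact: ltnW.
  - move=> u v euv cu; apply: contraNneq no_tight => cv.
    by apply/existsP; exists u; apply/existsP; exists v; rewrite euv cu cv !eqxx.
  - by move=> x /=; case: (c x =P 0) => // /eqP; rewrite lt0n.
by move: (chi_min _ _ d'_gt0 le_2d'n' cop' hom'); rewrite nE; lia.
Qed.

Lemma free_independent_window n d c (S : {set T}) : symmetric e ->
  is_circ_chrom e n d -> 1 < d -> circ_colouring n d c ->
  (forall x, x \in S -> 0 < c x < d) -> free_independent e S.
Proof.
move=> e_sym chi_c d_gt1 col_c cS.
have [u [v [euv cu cv]]] := circ_colouring_tight e_sym chi_c d_gt1 col_c.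
apply: (@free_independent_of_edge S [set x | c x < d] [set x | 0 < c x <= d] u v).
- by apply/subsetP => x /cS; rewrite inE; lia.
- by apply/subsetP => x /cS; rewrite inE; lia.
- by apply: (independent_arc (lo := 0) col_c) => x; rewrite inE.
- by apply: (independent_arc (lo := 1) col_c) => x; rewrite inE; lia.
- by rewrite inE cu; lia.
- by rewrite inE cv; lia.
- exact: euv.
Qed.

Lemma free_independent_arc n d c a (S : {set T}) : symmetric e ->
  is_circ_chrom e n d -> 1 < d -> circ_colouring n d c ->
  (forall x, x \in S -> a <= c x < a + d.-1) -> free_independent e S.
Proof.
move=> e_sym chi_c d_gt1 col_c cS; have [_ le_2dn _ _ _] := chi_c.
apply: (free_independent_window (c := rotn n 1 \o (rotn n (n - a) \o c)) e_sym chi_c d_gt1).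
  by apply: circ_colouring_rotn; [lia | apply: circ_colouring_rotn; rewrite ?leq_subr].
move=> x /cS cx_in /=; have := col_c.1 x => cx_lt.
have -> : rotn n (n - a) (c x) = c x - a by rewrite /rotn; case: ifP; lia.
by rewrite /rotn; case: ifP; lia.
Qed.

Lemma free_partition_arcs n d : symmetric e -> is_circ_chrom e n d -> 1 < d ->
  free_partition e (n.-1 %/ d.-1).+1.
Proof.
move=> e_sym chi_c d_gt1; have [_ _ _ /circ_homP[c col_c] _] := chi_c.
have block_lt x : c x %/ d.-1 < (n.-1 %/ d.-1).+1.
  by rewrite ltnS leq_div2r // -ltnS prednK ?col_c.1 //; have := col_c.1 x; lia.
exists (fun x => Ordinal (block_lt x)) => j.
apply: (free_independent_arc (a := j * d.-1) e_sym chi_c d_gt1 col_c) => x.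
rewrite inE => /eqP/(congr1 val) /= <-; have dpred_gt0 : 0 < d.-1 by lia.
by have := leq_divM (c x) d.-1; have := ltn_ceil (c x) dpred_gt0; lia.
Qed.

Definition free_partitionb t : bool :=
  [exists f : {ffun T -> 'I_t}, [forall j, free_independent e [set x | f x == j]]].

Lemma free_partitionP t : reflect (free_partition e t) (free_partitionb t).
Proof.
apply: (iffP existsP) => [[f /forallP f_free] | [f f_free]]; first by exists f.
exists (finfun f); apply/forallP => j.
by congr free_independent: (f_free j); apply/setP => x; rewrite !inE ffunE.
Qed.

Lemma is_free_chrom_exists t0 : 0 < t0 -> free_partition e t0 ->
  exists2 t, is_free_chrom e t & t <= t0.
Proof.
move=> t0_gt0 /free_partitionP fp0.
have ex_t : exists t, (0 < t) && free_partitionb t by exists t0; rewrite t0_gt0.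
case: (ex_minnP ex_t) => t /andP[t_gt0 /free_partitionP fp_t] t_min.
exists t; last by apply: t_min; rewrite t0_gt0.
by split=> // t' t'_gt0 /free_partitionP fp'; apply: t_min; rewrite t'_gt0.
Qed.

Lemma circ_chrom_lt_colorable n d k : is_circ_chrom e n d -> 1 < d ->
  colorable e k -> n < k * d.
Proof.
move=> [_ le_2dn cop_nd _ chi_min] d_gt1 [f f_col].
pose k' := maxn k 2.
have hom' : circ_hom e k' 1.
  exists (fun x => widen_ord (leq_maxl k 2) (f x)) => u v /f_col.
  case: (f u) (f v) => [a a_lt] [b b_lt]; rewrite -(inj_eq val_inj) /circ_adj /absdiff /=.
  by rewrite /k'; lia.
have := chi_min k' 1 isT (leq_maxr k 2) (coprimen1 k') hom'; rewrite muln1.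
have : n != k' * d by apply: contraTneq cop_nd => ->; rewrite /coprime gcdnC gcdnMl; lia.
by case: (leqP 2 k); lia.
Qed.

End FreeColouring.

Theorem mainTheorem2 (T : finType) (e : rel T)
  (e_sym : symmetric e) (e_irr : irreflexive e) (n d : nat) :
  is_circ_chrom e n d -> 2 <= d ->
  exists t : nat,
    [/\ is_free_chrom e t,
        (t%:Z <= Num.ceil ((n%:Q / d%:Q) * (1 + 1 / (d%:Q - 1))))%R &
        forall k : nat, is_chrom e k ->
          (Num.ceil ((n%:Q / d%:Q) * (1 + 1 / (d%:Q - 1))) <= 2 * k%:Z - 1)%R].
Proof.
move=> chi_c d_gt1; have [_ le_2dn _ _ _] := chi_c.
have ceilE :
    (Num.ceil (n%:Q / d%:Q * (1 + 1 / (d%:Q - 1))) = (n.-1 %/ d.-1).+1%:Z)%R.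
  by rewrite div_mul_1DinvB1 // ceil_divn //; lia.
have [t free_t t_le] :=
  is_free_chrom_exists (ltn0Sn _) (free_partition_arcs e_sym chi_c d_gt1).
exists t; rewrite ceilE; split=> [//||k [col_k _]]; first by rewrite lez_nat.
have lt_n_kd := circ_chrom_lt_colorable chi_c d_gt1 col_k.
have : n.-1 %/ d.-1 < (2 * k).-1 by rewrite ltn_divLR; nia.
by lia.
Qed.
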